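(* For any $C>1$, any odd $d\ge3$, and any $\eta\ge2$, there exists a forward-KL-regularized linear bandit instance of dimension $d$ such that $C^{\pi^*}=O(C)$ and $D^2_{\pi^*}=\Omega(Cd)$; consequently $D^2_{\pi^*}=\Omega(d\,C^{\pi^*})$.
   Context: A forward-KL-regularized linear bandit instance (single context) consists of a finite action set $\mathcal A$, a feature map $\phi:\mathcal A\to\mathbb R^d$, a parameter set $\Theta\subset\mathbb R^d$ defining the function class $\mathcal F=\{a\mapsto\langle\theta,\phi(a)\rangle:\theta\in\Theta\}$, a true parameter $\theta^*\in\Theta$ with mean reward $r(a)=\langle\theta^*,\phi(a)\rangle\in[0,1]$, a reference policy $\pi^{\mathrm{ref}}\in\Delta(\mathcal A)$ with full support, and $\eta>0$. The optimal policy is $\pi^*=\arg\max_{\pi\in\Delta(\mathcal A)}\sum_a r(a)\pi(a)-\eta^{-1}\mathrm{KL}(\pi^{\mathrm{ref}}\|\pi)$. $C^{\pi^*}=\max_a\pi^*(a)/\pi^{\mathrm{ref}}(a)$; $D^2(a)=\sup_{g,h\in\mathcal F}\frac{(g(a)-h(a))^2}{\mathbb E_{a'\sim\pi^{\mathrm{ref}}}[(g(a')-h(a'))^2]}$; $D^2_{\pi^*}=\mathbb E_{a\sim\pi^*}D^2(a)$. $O,\Omega$ hide absolute constants. *)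

From HB Require Import structures.
From mathcomp Require Import all_boot all_order all_algebra.
From mathcomp Require Import all_classical all_reals all_analysis.
Set Implicit Arguments. Unset Strict Implicit. Unset Printing Implicit Defensive.
Import Order.TTheory GRing.Theory Num.Theory.
Local Open Scope classical_set_scope.
Local Open Scope ring_scope.

Section KLBandit.
Variables (R : realType) (A : finType) (d : nat).

Definition linf (phi : A -> 'I_d -> R) (theta : 'I_d -> R) (a : A) : R :=
  \sum_(i < d) theta i * phi a i.

Definition is_dist (p : A -> R) : Prop :=
  (forall a, 0 <= p a) /\ \sum_(a : A) p a = 1.

Definition full_support (p : A -> R) : Prop := forall a, 0 < p a.

(* forward KL divergence KL(pref || p) = sum_a pref(a) ln (pref(a)/p(a)),
   used only for full-support p (otherwise it is +infinity). *)
Definition KLfwd (pref p : A -> R) : R :=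
  \sum_(a : A) pref a * ln (pref a / p a).

Definition objective (r : A -> R) (eta : R) (pref p : A -> R) : R :=
  \sum_(a : A) r a * p a - eta^-1 * KLfwd pref p.

(* p is an optimal policy (an argmax of the objective over Delta(A)).
   Policies without full support have KL = +infinity, hence objective
   -infinity, so they are never optimal and never compete. *)
Definition is_optimal (r : A -> R) (eta : R) (pref p : A -> R) : Prop :=
  is_dist p /\ full_support p /\
  forall q, is_dist q -> full_support q ->
    objective r eta pref q <= objective r eta pref p.

Definition conc_coef (pref p : A -> R) : R :=
  \big[Num.max/0]_(a : A) (p a / pref a).

(* ratio (g(a)-h(a))^2 / E_{a'~pref}[(g(a')-h(a'))^2] in \bar R,
   with the conventions 0/0 = 0 and x/0 = +oo for x > 0. *)
Definition d2ratio (phi : A -> 'I_d -> R) (pref : A -> R)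
    (t1 t2 : 'I_d -> R) (a : A) : \bar R :=
  let num := (linf phi t1 a - linf phi t2 a) ^+ 2 in
  let den := \sum_(a' : A) pref a' * (linf phi t1 a' - linf phi t2 a') ^+ 2 in
  if den == 0 then (if num == 0 then 0%E else +oo%E) else (num / den)%:E.

Definition D2 (phi : A -> 'I_d -> R) (Theta : set ('I_d -> R)) (pref : A -> R)
    (a : A) : \bar R :=
  ereal_sup [set x | exists t1, exists t2,
                       Theta t1 /\ Theta t2 /\ x = d2ratio phi pref t1 t2 a].

Definition D2pi (phi : A -> 'I_d -> R) (Theta : set ('I_d -> R))
    (pref p : A -> R) : \bar R :=
  (\sum_(a : A) (p a)%:E * D2 phi Theta pref a)%E.

End KLBandit.

From HB Require Import structures.
From mathcomp Require Import all_boot all_order all_algebra.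
From mathcomp Require Import all_classical all_reals all_analysis.
From mathcomp Require Import lra ring.
Set Implicit Arguments. Unset Strict Implicit. Unset Printing Implicit Defensive.
Import Order.TTheory GRing.Theory Num.Theory.
Local Open Scope classical_set_scope.
Local Open Scope ring_scope.

(* The forward-KL objective is strictly concave, so a full-support policy
   satisfying the first-order condition [r a = lam - pref a / (eta * pi a)]
   is its unique maximiser.  Take the actions to be a null arm with feature 0
   and the d standard basis vectors, with reward 0 on the null arm and a
   constant reward on the basis arms; put reference mass 1 / (d (2C - 1)) on
   each basis arm.  The first-order condition then gives pi*/pref = C on every
   basis arm and 1/2 on the null arm, so C^{pi*} <= C.  For the full linear
   class, the indicator of coordinate i witnesses D^2(e_i) >= 1 / pref(e_i),
   hence D^2_{pi*} >= sum_i pi*(e_i) / pref(e_i) = C d. *)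

Definition ln_gap (R : realType) (x : R) : R := x - 1 - ln x.

Lemma ln_gap_ge0 (R : realType) (x : R) : 0 < x -> 0 <= ln_gap x.
Proof.
by move=> x0; have := @le_ln1Dx R (x - 1); rewrite addrCA subrr addr0 /ln_gap; lra.
Qed.

Lemma ln_gap_eq0 (R : realType) (x : R) : 0 < x -> (ln_gap x == 0) = (x == 1).
Proof.
move=> x0; apply/idP/idP => [|/eqP->]; last by rewrite /ln_gap ln1 subrr subr0.
apply: contraLR => x1; have lx : ln x != 0 by rewrite ln_eq0.
have := expR_gt1Dx lx; rewrite lnK ?posrE // /ln_gap => ?; rewrite gt_eqF //; lra.
Qed.

Section ForwardKLStationarity.
Variables (R : realType) (A : finType) (r pref p : A -> R) (eta lam : R).
Hypotheses (eta_gt0 : 0 < eta) (pref_full : full_support pref)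
  (p_dist : is_dist p) (p_full : full_support p)
  (r_stationary : forall a, r a = lam - pref a / (eta * p a)).

Lemma objective_gap q : is_dist q -> full_support q ->
  objective r eta pref p - objective r eta pref q =
  eta^-1 * \sum_a pref a * ln_gap (q a / p a).
Proof.
move=> [_ sum_q] q_full.
rewrite /objective /KLfwd !mulr_sumr -!sumrB.
transitivity (\sum_a (eta^-1 * (pref a * ln_gap (q a / p a)) - lam * (q a - p a))).
  apply: eq_bigr => a _; rewrite /ln_gap !ln_div ?posrE // r_stationary.
  by field; rewrite !gt_eqF.
(* the multiplier [lam] drops out because [p] and [q] have the same mass *)
by rewrite big_split /= sumrN -!mulr_sumr sumrB sum_q (proj2 p_dist) subrr mulr0 subr0.
Qed.

Lemma ln_gap_weighted_ge0 q : full_support q -> forall a,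
  0 <= pref a * ln_gap (q a / p a).
Proof. by move=> q_full a; rewrite mulr_ge0 ?ln_gap_ge0 ?divr_gt0 ?ltW. Qed.

Lemma stationary_optimal : is_optimal r eta pref p.
Proof.
do 2 split=> //; move=> q q_dist q_full.
rewrite -subr_ge0 objective_gap // mulr_ge0 ?invr_ge0 ?(ltW eta_gt0) //.
by apply: sumr_ge0 => a _; apply: ln_gap_weighted_ge0.
Qed.

Lemma stationary_optimal_unique q : is_optimal r eta pref q -> q = p.
Proof.
move=> [q_dist [q_full q_opt]].
have := q_opt p p_dist p_full; rewrite -subr_le0 objective_gap //.
rewrite pmulr_rle0 ?invr_gt0 // => gap_le0.
have gap0 : \sum_a pref a * ln_gap (q a / p a) = 0.
  by apply/le_anti; rewrite gap_le0 sumr_ge0 // => a _; apply: ln_gap_weighted_ge0.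
apply/funext => a.
have /eqP := @psumr_eq0P _ _ predT _ (fun b _ => ln_gap_weighted_ge0 q_full b) gap0 a isT.
rewrite mulf_eq0 gt_eqF //= ln_gap_eq0 ?divr_gt0 //.
have pa_neq0 : p a != 0 by rewrite gt_eqF.
by move=> /eqP qp; rewrite -[q a](divfK pa_neq0) qp mul1r.
Qed.

End ForwardKLStationarity.

Section CoverageQuantities.
Variables (R : realType) (A : finType) (d : nat) (phi : A -> 'I_d -> R).

Lemma d2ratio_diag pref t a : d2ratio phi pref t t a = 0%E.
Proof.
rewrite /d2ratio subrr expr0n /= eqxx big1 ?eqxx // => b _.
by rewrite subrr expr0n mulr0.
Qed.

Lemma D2_ge0 Theta pref t a : Theta t -> (0 <= D2 phi Theta pref a)%E.
Proof. by move=> Theta_t; apply: ereal_sup_ubound; exists t, t; rewrite d2ratio_diag. Qed.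

Lemma conc_coef_le (pref p : A -> R) c :
  0 <= c -> (forall a, p a / pref a <= c) -> conc_coef pref p <= c.
Proof. by move=> c_ge0 ratio_le; apply: bigmax_le. Qed.

End CoverageQuantities.

Section BasisBandit.
Variables (R : realType) (d : nat).

Definition basis_feature (a : 'I_d.+1) (k : 'I_d) : R := (a == lift ord0 k)%:R.

Lemma linf_basis_lift t j : linf basis_feature t (lift ord0 j) = t j.
Proof.
rewrite /linf (bigD1 j) //= /basis_feature eqxx mulr1 big1 ?addr0 // => k kj.
by rewrite (inj_eq (@lift_inj _ ord0)) eq_sym (negbTE kj) mulr0.
Qed.

Lemma linf_basis0 t : linf basis_feature t ord0 = 0.
Proof. by rewrite /linf big1 // => k _; rewrite /basis_feature (negbTE (neq_lift _ _)) mulr0. Qed.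

Lemma linf_basis_delta i a :
  linf basis_feature (fun k => (k == i)%:R) a = (a == lift ord0 i)%:R.
Proof.
case: (unliftP ord0 a) => [j ->|->]; rewrite ?linf_basis_lift ?linf_basis0.
  by rewrite (inj_eq (@lift_inj _ ord0)).
by rewrite (negbTE (neq_lift _ _)).
Qed.

Lemma D2_basis_ge pref i : full_support pref ->
  ((pref (lift ord0 i))^-1%:E <= D2 basis_feature setT pref (lift ord0 i))%E.
Proof.
move=> pref_full; apply: ereal_sup_ubound.
exists (fun k => (k == i)%:R), (fun _ => 0); do 2 split=> //.
have linf0 b : linf basis_feature (fun _ => 0) b = 0.
  by rewrite /linf big1 // => k _; rewrite mul0r.
have den : \sum_b pref b * (linf basis_feature (fun k => (k == i)%:R) b
                             - linf basis_feature (fun _ => 0) b) ^+ 2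
           = pref (lift ord0 i).
  rewrite (bigD1 (lift ord0 i)) //= big1 => [|b /negbTE b_neq].
    by rewrite linf_basis_delta linf0 eqxx subr0 expr1n mulr1 addr0.
  by rewrite linf_basis_delta linf0 b_neq subr0 expr0n mulr0.
rewrite /d2ratio den linf_basis_delta linf0 eqxx subr0 expr1n gt_eqF //=.
by rewrite div1r.
Qed.

Lemma D2pi_basis_ge (pref p : 'I_d.+1 -> R) :
  full_support pref -> (forall a, 0 <= p a) ->
  ((\sum_(i < d) p (lift ord0 i) / pref (lift ord0 i))%:E
     <= D2pi basis_feature setT pref p)%E.
Proof.
move=> pref_full p_ge0; rewrite /D2pi big_ord_recl /= -sumEFin.
apply: le_trans (leeDr _ _); last by rewrite mule_ge0 ?lee_fin // (D2_ge0 _ _ (t := fun _ => 0)).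
apply: lee_sum => i _; rewrite EFinM.
by apply: lee_wpmul2l; [rewrite lee_fin | apply: D2_basis_ge].
Qed.

Lemma sum_if_ord0 (x y : R) : \sum_(a < d.+1) (if a == ord0 then x else y) = x + y *+ d.
Proof. by rewrite big_ord_recl eqxx (eq_bigr (fun _ => y)) ?sumr_const ?card_ord. Qed.

End BasisBandit.

Arguments basis_feature {R d}.

Section HardInstance.
Variables (R : realType) (d : nat) (C eta : R).

Definition hard_pref (a : 'I_d.+1) : R :=
  if a == ord0 then (2 * C - 2) / (2 * C - 1) else (d%:R * (2 * C - 1))^-1.

Definition hard_pistar (a : 'I_d.+1) : R :=
  if a == ord0 then (C - 1) / (2 * C - 1) else C / (d%:R * (2 * C - 1)).

Definition hard_theta (k : 'I_d) : R := (2 - C^-1) / eta.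

Hypotheses (d_gt0 : (0 < d)%N) (C_gt1 : 1 < C) (eta_ge2 : 2 <= eta).

Let d_pos : 0 < d%:R :> R. Proof. by rewrite ltr0n. Qed.
Let u_gt0 : 0 < 2 * C - 1. Proof. by move: C_gt1; lra. Qed.
Let eta_gt0 : 0 < eta. Proof. by move: eta_ge2; lra. Qed.

Lemma hard_pref_full : full_support hard_pref.
Proof.
move=> a; rewrite /hard_pref; case: ifP => _; last by rewrite invr_gt0 mulr_gt0.
by rewrite divr_gt0 //; move: C_gt1; lra.
Qed.

Lemma hard_pref_dist : is_dist hard_pref.
Proof.
split=> [a|]; first exact/ltW/hard_pref_full.
rewrite sum_if_ord0 -mulr_natr; field.
by rewrite !gt_eqF.
Qed.

Lemma hard_pistar_full : full_support hard_pistar.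
Proof.
move=> a; rewrite /hard_pistar; case: ifP => _; last by rewrite divr_gt0 ?mulr_gt0 //; move: C_gt1; lra.
by rewrite divr_gt0 //; move: C_gt1; lra.
Qed.

Lemma hard_pistar_dist : is_dist hard_pistar.
Proof.
split=> [a|]; first exact/ltW/hard_pistar_full.
rewrite sum_if_ord0 -mulr_natr; field.
by rewrite !gt_eqF.
Qed.

Lemma hard_reward_stationary a :
  linf basis_feature hard_theta a = 2 / eta - hard_pref a / (eta * hard_pistar a).
Proof.
rewrite /hard_pref /hard_pistar.
case: (unliftP ord0 a) => [j ->|->]; rewrite ?linf_basis_lift ?linf_basis0 /= /hard_theta.
  by field; rewrite !gt_eqF //; move: C_gt1; lra.
by field; rewrite !gt_eqF //; move: C_gt1; lra.
Qed.

Lemma hard_reward_bounded a : 0 <= linf basis_feature hard_theta a <= 1.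
Proof.
case: (unliftP ord0 a) => [j ->|->]; rewrite ?linf_basis_lift ?linf_basis0 ?lexx ?ler01 //.
have C_inv : 0 < C^-1 < 1 by rewrite invr_gt0 invf_lt1 //; move: C_gt1; lra.
by rewrite /hard_theta divr_ge0 ?ler_pdivrMr //=; move: eta_ge2; lra.
Qed.

Lemma hard_ratio_lift i : hard_pistar (lift ord0 i) / hard_pref (lift ord0 i) = C.
Proof. by rewrite /hard_pistar /hard_pref /=; field; rewrite !gt_eqF. Qed.

Lemma hard_conc_coef : conc_coef hard_pref hard_pistar <= C.
Proof.
apply: conc_coef_le => [|a]; first by move: C_gt1; lra.
case: (unliftP ord0 a) => [j ->|->]; first by rewrite hard_ratio_lift.
rewrite /hard_pistar /hard_pref eqxx.
have -> : (C - 1) / (2 * C - 1) / ((2 * C - 2) / (2 * C - 1)) = 2^-1.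
  by field; rewrite !gt_eqF //; move: C_gt1; lra.
by move: C_gt1; lra.
Qed.

Lemma hard_D2pi : ((C * d%:R)%:E <= D2pi basis_feature setT hard_pref hard_pistar)%E.
Proof.
apply: le_trans (D2pi_basis_ge hard_pref_full (fun a => ltW (hard_pistar_full a))).
by rewrite (eq_bigr (fun _ => C)) => [|i _]; rewrite ?sumr_const ?card_ord ?mulr_natr ?hard_ratio_lift.
Qed.

End HardInstance.

Theorem propositionB1 (R : realType) :
  exists K1 K2 K3 : R, 0 < K1 /\ 0 < K2 /\ 0 < K3 /\
  forall (C : R) (d : nat) (eta : R),
    1 < C -> odd d -> (3 <= d)%N -> 2 <= eta ->
    exists (A : finType) (phi : A -> 'I_d -> R) (Theta : set ('I_d -> R))
           (thetastar : 'I_d -> R) (pref : A -> R),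
      Theta thetastar /\
      (forall a, 0 <= linf phi thetastar a <= 1) /\
      is_dist pref /\ full_support pref /\
      (exists pistar, is_optimal (linf phi thetastar) eta pref pistar) /\
      forall pistar, is_optimal (linf phi thetastar) eta pref pistar ->
        conc_coef pref pistar <= K1 * C /\
        ((K2 * C * d%:R)%:E <= D2pi phi Theta pref pistar)%E /\
        ((K3 * d%:R * conc_coef pref pistar)%:E <= D2pi phi Theta pref pistar)%E.
Proof.
exists 1, 1, 1; do 3 split=> //.
move=> C d eta C_gt1 _ d_ge3 eta_ge2.
have d_gt0 : (0 < d)%N by apply: leq_trans d_ge3.
have eta_gt0 : 0 < eta by lra.
have stationary := hard_reward_stationary d_gt0 C_gt1 eta_ge2.
have pref_full := hard_pref_full d_gt0 C_gt1.
have pistar_dist := hard_pistar_dist d_gt0 C_gt1.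
have pistar_full := hard_pistar_full d_gt0 C_gt1.
exists _, basis_feature, setT, (hard_theta C eta), (hard_pref C).
do 2 split=> //; first exact: hard_reward_bounded.
split; first exact: hard_pref_dist.
do 2 split=> //; first by exists (hard_pistar C); apply: stationary_optimal stationary.
move=> pistar /(stationary_optimal_unique eta_gt0 pref_full pistar_dist pistar_full stationary) ->.
have conc_le := hard_conc_coef d_gt0 C_gt1.
have D2pi_ge := hard_D2pi d_gt0 C_gt1.
rewrite !mul1r; do 2 split=> //.
by apply: le_trans D2pi_ge; rewrite lee_fin mulrC ler_wpM2r.
Qed.
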